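(* Fix integers $k_1,k_2$ with $-1\le k_1\le k_2$ and an integer $m\ge 2k_1+2$. For $(x_1,\ldots,x_{m-1})\in\mathbb{Z}_{\ge0}^{m-1}$ let $\overline{x}=(x_1,\ldots,x_{2k_1+1})$. There is a bijection between the set of numerical semigroups $S$ with $m(S)=m$, $g(S)=m+k_1$ and $e(S)=g(S)-k_2$, and the set of sequences $(x_1,\ldots,x_{m-1})$ satisfying: (1) $x_1,\ldots,x_{m-1}\in\{1,2,3\}$; (2) if $i\ge 2k_1$, then $x_i\in\{1,2\}$; (3) whenever $i_1,i_2,i_3\in[1,2k_1+1]$ satisfy $i_1+i_2=i_3$, we have $(x_{i_1},x_{i_2},x_{i_3})\neq(1,1,3)$; (4) $\#\{i\in[2k_1+2,m-1]\mid x_i=2\}=k_1+1-a(\overline{x})-2b(\overline{x})$; (5) $a(\overline{x})+b(\overline{x})-c(\overline{x})=2k_1+1-k_2$.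
   Context: A numerical semigroup $S$ is a submonoid of $\mathbb{N}_0$ with finite complement; $g(S)$ is the size of the complement (genus), $m(S)$ the smallest nonzero element (multiplicity), and $e(S)$ the size of the minimal generating set $(S\setminus\{0\})\setminus((S\setminus\{0\})+(S\setminus\{0\}))$ (embedding dimension). For a tuple $\overline{x}=(x_1,\ldots,x_t)\in\{1,2,3\}^t$ define $a(\overline{x})=\#\{i\in[1,t]: x_i=2\}$, $b(\overline{x})=\#\{i\in[1,t]: x_i=3\}$, and $c(\overline{x})=\#\{i\in[1,t]: \exists j_1,j_2\in[1,t] \text{ with } j_1+j_2=i \text{ and } (x_{j_1},x_{j_2},x_i)=(1,1,2)\}$. *)

From mathcomp Require Import all_boot all_order all_algebra.
Set Implicit Arguments. Unset Strict Implicit. Unset Printing Implicit Defensive.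
Import Order.TTheory GRing.Theory Num.Theory.

Definition is_numsg (S : nat -> bool) : Prop :=
  [/\ S 0,
      (forall a b, S a -> S b -> S (a + b)) &
      exists N, forall n, N <= n -> S n].

Definition mult_is (S : nat -> bool) (m : nat) : Prop :=
  [/\ 0 < m, S m & forall k, 0 < k < m -> ~~ S k].

Definition genus_is (S : nat -> bool) (g : nat) : Prop :=
  exists N, (forall n, N <= n -> S n) /\ count (predC S) (iota 0 N) = g.

Definition mingen (S : nat -> bool) (n : nat) : bool :=
  [&& 0 < n, S n & ~~ has (fun a => [&& 0 < a, S a, 0 < n - a & S (n - a)])
                             (iota 0 n)].

Definition edim_is (S : nat -> bool) (e : nat) : Prop :=
  exists N, (forall n, mingen S n -> n < N) /\ count (mingen S) (iota 0 N) = e.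

Definition semigroup_class (m : nat) (k1 k2 : int) (S : nat -> bool) : Prop :=
  is_numsg S /\ mult_is S m /\
  exists g e : nat, [/\ genus_is S g, edim_is S e,
                        (g%:Z = m%:Z + k1)%R & (e%:Z = g%:Z - k2)%R].

Definition int_to_nat (z : int) : nat := match z with Posz n => n | Negz _ => 0 end.

(* 1-based indexing of tuples: x_i *)
Definition xi (x : seq nat) (i : nat) : nat := nth 0 x i.-1.

Definition a_ (y : seq nat) : nat := count (pred1 2) y.
Definition b_ (y : seq nat) : nat := count (pred1 3) y.
Definition c_ (y : seq nat) : nat :=
  let t := size y in
  count (fun i => has (fun j1 => has (fun j2 =>
            (j1 + j2 == i) && ((xi y j1, xi y j2, xi y i) == (1, 1, 2)))
            (iota 1 t)) (iota 1 t)) (iota 1 t).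

Definition xbar (k1 : int) (x : seq nat) : seq nat :=
  take (int_to_nat (2 * k1 + 1)%R) x.

Definition seq_class (m : nat) (k1 k2 : int) (x : seq nat) : Prop :=
  size x = m.-1 /\
  [/\ all (fun v => v \in [:: 1; 2; 3]) x,
      (forall i : nat, 1 <= i <= m.-1 -> (2 * k1 <= i%:Z)%R ->
                   xi x i \in [:: 1; 2]),
      (forall i1 i2 i3 : nat, 1 <= i1 -> 1 <= i2 -> 1 <= i3 ->
                   (i3%:Z <= 2 * k1 + 1)%R -> i1 + i2 = i3 ->
                   (xi x i1, xi x i2, xi x i3) != (1, 1, 3)),
      ((count (fun i => (2 * k1 + 2 <= i%:Z)%R && (xi x i == 2))
                        (iota 1 m.-1))%:Z
                 = k1 + 1 - (a_ (xbar k1 x))%:Z - 2 * (b_ (xbar k1 x))%:Z)%R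
    & ((a_ (xbar k1 x))%:Z + (b_ (xbar k1 x))%:Z - (c_ (xbar k1 x))%:Z
                 = 2 * k1 + 1 - k2)%R].

From mathcomp Require Import all_boot all_order all_algebra zify.
Import Order.TTheory GRing.Theory Num.Theory.
Set Implicit Arguments.
Unset Strict Implicit.
Unset Printing Implicit Defensive.

(* A numerical semigroup S of multiplicity m is determined by its Kunz
   coordinates x_r = min {k | k m + r \in S}, 0 < r < m; its gaps are the
   k m + r with k < x_r, so g(S) = m - 1 + K with K = sum (x_r - 1).
   Here K = k1 + 1 <= m / 2, and a pairing argument bounds every x_r by 3:
   if x_r is large, then for every j one of x_j, x_(r-j) (resp. x_(r+m-j)) is
   at least 2, which already forces K > m / 2.  The same argument shows that
   x_r = 3 only for r <= 2 k1 - 1, and that the minimal generators are m and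
   the x_r m + r with x_r = 1, or with x_r = 2, r <= 2 k1 + 1 and r not a sum
   of two indices of coordinate 1.  Then (1)-(3) are Kunz's inequalities,
   (4) says K = k1 + 1 and (5) says e(S) = g(S) - k2. *)

Lemma count_iota_sum (P : pred nat) lo n :
  count P (iota lo n) = \sum_(lo <= j < lo + n) P j.
Proof. by rewrite -sumn_count sumnE big_map /index_iota addKn. Qed.

Lemma count_iota_pairing (P : pred nat) lo n :
  (forall j, lo <= j < lo + n -> P j || P (lo + (lo + n) - j.+1)) ->
  n <= 2 * count P (iota lo n).
Proof.
move=> pairP; rewrite mul2n -addnn {2}count_iota_sum big_nat_rev count_iota_sum.
rewrite -big_split.
have {1}-> : n = \sum_(lo <= j < lo + n) 1 by rewrite sum_nat_const_nat muln1 addKn.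
rewrite big_nat [X in _ <= X]big_nat; apply: leq_sum => j /pairP.
by case: (P j); case: (P _).
Qed.

Lemma iota_split_at lo n i : lo <= i < lo + n ->
  iota lo n = iota lo (i - lo) ++ i :: iota i.+1 (lo + n - i.+1).
Proof.
move=> /andP[le_lo_i lt_i_n].
have -> : n = (i - lo) + (lo + n - i.+1).+1 by lia.
rewrite iotaD subnKC //=; congr (_ ++ _ :: iota _ _); lia.
Qed.

Lemma count_pairs_below (P : pred nat) n i : 0 < i <= n ->
  (forall j, 0 < j < i -> P j || P (i - j)) ->
  i.-1 + 2 * P i <= 2 * count P (iota 1 n).
Proof.
move=> iP pairP; rewrite (@iota_split_at 1 n i) ?add1n // count_cat /= subn1.
have : i.-1 <= 2 * count P (iota 1 i.-1).
  apply: count_iota_pairing => j jP.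
  by rewrite (_ : _ - j.+1 = i - j); [apply: pairP | ]; lia.
lia.
Qed.

Lemma count_pairs_around (P : pred nat) m i : 0 < i < m ->
  (forall j, 0 < j < i -> P j || P (i - j)) ->
  (forall j, i < j < m -> P j || P (i + m - j)) ->
  m - 2 + 2 * P i <= 2 * count P (iota 1 m.-1).
Proof.
move=> iP below around; rewrite (@iota_split_at 1 m.-1 i) ?add1n; last lia.
rewrite count_cat /= subn1 subSS.
have : i.-1 <= 2 * count P (iota 1 i.-1).
  apply: count_iota_pairing => j jP.
  by rewrite (_ : _ - j.+1 = i - j); [apply: below | ]; lia.
have : m.-1 - i <= 2 * count P (iota i.+1 (m.-1 - i)).
  apply: count_iota_pairing => j jP.
  by rewrite (_ : _ - j.+1 = i + m - j); [apply: around | ]; lia.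
lia.
Qed.

Lemma count_sum (T : Type) (P : pred T) (s : seq T) : count P s = \sum_(t <- s) P t.
Proof. by rewrite -sumn_count sumnE big_map. Qed.

Lemma eq_in_countD (T : eqType) (s : seq T) (a1 a2 b1 b2 : pred T) :
  {in s, forall t, a1 t + a2 t = b1 t + b2 t :> nat} ->
  count a1 s + count a2 s = count b1 s + count b2 s.
Proof. by move=> eq_ab; rewrite !count_sum -!big_split; apply: eq_big_seq. Qed.

Lemma count_iota_blocks (P : pred nat) q m :
  count P (iota 0 (q * m)) = \sum_(r <- iota 0 m) \sum_(k < q) P (k * m + r).
Proof.
elim: q => [|q IH]; first by rewrite big1 // => r _; rewrite big_ord0.
rewrite mulSnr iotaD count_cat IH add0n -[q * m]addn0 iotaDl count_map count_sum.
by rewrite -big_split; apply: eq_bigr => r _; rewrite big_ord_recr.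
Qed.

Lemma count_iota_eventually (P : pred nat) N N' :
  (forall n, N <= n -> ~~ P n) -> N <= N' -> count P (iota 0 N') = count P (iota 0 N).
Proof.
move=> PN le_N; rewrite -(subnKC le_N) iotaD count_cat.
rewrite (@eq_in_count _ _ pred0 (iota (0 + N) _)) ?count_pred0 ?addn0 // => n.
by rewrite mem_iota => /andP[/PN/negbTE].
Qed.

Lemma count_iota_stable (P : pred nat) N N' :
  (forall n, N <= n -> ~~ P n) -> (forall n, N' <= n -> ~~ P n) ->
  count P (iota 0 N) = count P (iota 0 N').
Proof.
move=> PN PN'; rewrite -(count_iota_eventually PN (leq_addr N' N)).
exact: count_iota_eventually PN' (leq_addl N N').
Qed.

Lemma iota0_pred n : 0 < n -> iota 0 n = 0 :: iota 1 n.-1.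
Proof. by case: n. Qed.

Lemma count_mem_gt0 (P : pred nat) s i : i \in s -> P i -> 0 < count P s.
Proof. by move=> si Pi; rewrite -has_count; apply/hasP; exists i. Qed.

Lemma genus_is_ge S g n : genus_is S g -> count (predC S) (iota 0 n) <= g.
Proof.
move=> [N [SN <-]]; rewrite -(@count_iota_eventually _ N (n + N)) ?leq_addl //.
  by rewrite iotaD count_cat leq_addr.
by move=> k /SN; rewrite negbK.
Qed.

Lemma genus_is_unique S g g' : genus_is S g -> genus_is S g' -> g = g'.
Proof.
move=> [N [SN <-]] [N' [SN' <-]].
by apply: count_iota_stable => n le_n /=; rewrite negbK; [exact: SN | exact: SN'].
Qed.

Lemma edim_is_unique S e e' : edim_is S e -> edim_is S e' -> e = e'.
Proof.
move=> [N [SN <-]] [N' [SN' <-]].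
apply: count_iota_stable => n le_n; apply/negP.
  by move/SN; rewrite ltnNge le_n.
by move/SN'; rewrite ltnNge le_n.
Qed.

Lemma mingenP (S : nat -> bool) n :
  reflect [/\ 0 < n, S n & forall a, 0 < a < n -> S a -> ~~ S (n - a)] (mingen S n).
Proof.
rewrite /mingen; apply: (iffP and3P) => -[n_gt0 Sn noSplit]; split=> //.
  move=> a /andP[a_gt0 lt_an] Sa; apply/negP => San.
  move/hasPn/(_ a): noSplit; rewrite mem_iota lt_an.
  by rewrite a_gt0 Sa San subn_gt0 lt_an => /(_ isT).
apply/hasPn => a; rewrite mem_iota => /andP[_ lt_an].
apply/negP => /and4P[a_gt0 Sa _ San].
by have := noSplit a; rewrite a_gt0 lt_an Sa San => /(_ isT isT).
Qed.

Lemma not_mingen_sum (S : nat -> bool) n a :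
  0 < a < n -> S a -> S (n - a) -> ~~ mingen S n.
Proof. by move=> aP Sa San; apply/mingenP => -[_ _ /(_ a aP Sa)]; rewrite San. Qed.

Section Extensionality.

Variables (S S' : nat -> bool).
Hypothesis eqS : S =1 S'.

Lemma is_numsg_ext : is_numsg S -> is_numsg S'.
Proof.
case=> S0 Sadd [N SN]; split=> [|a b|]; rewrite -?eqS //; first exact: Sadd.
by exists N => n; rewrite -eqS; exact: SN.
Qed.

Lemma mult_is_ext m : mult_is S m -> mult_is S' m.
Proof. by case=> m_gt0 Sm Smin; split=> // [|k]; rewrite -eqS //; exact: Smin. Qed.

Lemma genus_is_ext g : genus_is S g -> genus_is S' g.
Proof.
case=> N [SN <-]; exists N; split=> [n /SN|]; first by rewrite eqS.
by apply: eq_count => n /=; rewrite eqS.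
Qed.

Lemma mingen_ext : mingen S =1 mingen S'.
Proof.
move=> n; rewrite /mingen eqS; congr [&& _, _ & ~~ _].
by apply: eq_has => a; rewrite !eqS.
Qed.

Lemma edim_is_ext e : edim_is S e -> edim_is S' e.
Proof.
case=> N [SN <-]; exists N; split=> [n|]; first by rewrite -mingen_ext; exact: SN.
by apply: eq_count => n; rewrite mingen_ext.
Qed.

Lemma semigroup_class_ext m k1 k2 :
  semigroup_class m k1 k2 S -> semigroup_class m k1 k2 S'.
Proof.
case=> /is_numsg_ext S'_numsg [/mult_is_ext S'_mult [g [e [gS eS gE eE]]]].
by do 2!split=> //; exists g, e; split=> //; [exact: genus_is_ext | exact: edim_is_ext].
Qed.

End Extensionality.

Definition kunz_sg (m : nat) (x : seq nat) (n : nat) : bool :=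
  (n %% m == 0) || (xi x (n %% m) <= n %/ m).

(* The Kunz coordinates min {k | k m + r \in S} of S, capped at 3. *)
Definition kunz_coords (m : nat) (S : nat -> bool) : seq nat :=
  [seq if S (1 * m + r) then 1 else if S (2 * m + r) then 2 else 3 | r <- iota 1 m.-1].

Definition kunz_range (m : nat) (x : seq nat) : Prop :=
  forall i, 0 < i < m -> 1 <= xi x i <= 3.

(* For coordinates in {1, 2, 3} this is equivalent to Kunz's inequalities
   x_i + x_j >= x_(i+j) and x_i + x_j + 1 >= x_(i+j-m). *)
Definition kunz_ones_closed (m : nat) (x : seq nat) : Prop :=
  forall i j, 0 < i -> 0 < j -> i + j < m ->
    xi x i = 1 -> xi x j = 1 -> xi x (i + j) <= 2.

(* Equal to the sum of the x_i - 1 when every x_i is in {1, 2, 3}. *)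
Definition excess (m : nat) (x : seq nat) : nat :=
  count (fun i => 2 <= xi x i) (iota 1 m.-1) + count (fun i => 3 <= xi x i) (iota 1 m.-1).

Definition sum_of_ones (x : seq nat) (i : nat) : bool :=
  has (fun j => (xi x j == 1) && (xi x (i - j) == 1)) (iota 1 i.-1).

Definition two_of_ones (x : seq nat) (i : nat) : bool := (xi x i == 2) && sum_of_ones x i.

Definition count_coord (x : seq nat) (v T : nat) : nat :=
  count (fun i => xi x i == v) (iota 1 T).

Definition count_late2 (m : nat) (x : seq nat) (T : nat) : nat :=
  count (fun i => (T < i) && (xi x i == 2)) (iota 1 m.-1).

Definition abc_condition (K : nat) (k2 : int) (x : seq nat) : Prop :=
  let T := (2 * K).-1 in
  ((count_coord x 2 T)%:Z + (count_coord x 3 T)%:Z - (count (two_of_ones x) (iota 1 T))%:Z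
   = 2 * (K%:Z - 1) + 1 - k2)%R.

Definition kunz_mingen (m : nat) (x : seq nat) (i : nat) : bool :=
  mingen (kunz_sg m x) (xi x i * m + i).

Lemma coord_ge3_le_count m x i : 0 < i < m ->
  (3 <= xi x i) <= count (fun j => 3 <= xi x j) (iota 1 m.-1).
Proof.
move=> iP; case: leqP => // x3; apply: (@count_mem_gt0 _ _ i) => //.
by rewrite mem_iota; lia.
Qed.

Lemma excess_pairs_below m x i : 0 < i < m -> 2 <= xi x i ->
  (forall j, 0 < j < i -> (2 <= xi x j) || (2 <= xi x (i - j))) ->
  i.+1 + 2 * (3 <= xi x i) <= 2 * excess m x.
Proof.
move=> iP x2 below; have iP' : 0 < i <= m.-1 by lia.
have := coord_ge3_le_count x iP.
have := @count_pairs_below (fun j => 2 <= xi x j) m.-1 i iP' below.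
rewrite /excess x2; lia.
Qed.

Lemma excess_pairs_around m x i : 0 < i < m -> 2 <= xi x i ->
  (forall j, 0 < j < i -> (2 <= xi x j) || (2 <= xi x (i - j))) ->
  (forall j, i < j < m -> (2 <= xi x j) || (2 <= xi x (i + m - j))) ->
  m + 2 * (3 <= xi x i) <= 2 * excess m x.
Proof.
move=> iP x2 below around; have := coord_ge3_le_count x iP.
have := @count_pairs_around (fun j => 2 <= xi x j) m i iP below around.
rewrite /excess x2; lia.
Qed.

Section KunzSemigroup.

Variables (m : nat) (x : seq nat).
Hypotheses (m_gt0 : 0 < m) (x_range : kunz_range m x).

Lemma kunz_sgE q r : r < m -> kunz_sg m x (q * m + r) = (r == 0) || (xi x r <= q).
Proof.
move=> lt_rm; rewrite /kunz_sg modnMDl modn_small //.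
by rewrite divnMDl // divn_small // addn0.
Qed.

Lemma kunz_sg_m : kunz_sg m x m.
Proof. by rewrite /kunz_sg modnn. Qed.

Lemma kunz_sg_ge_m n : 0 < n -> kunz_sg m x n -> m <= n.
Proof.
case: (edivnP n m) => q r -> /implyP/(_ m_gt0) lt_rm n_gt0.
rewrite kunz_sgE //; case: q n_gt0 => [|q] /=; last by lia.
by rewrite add0n => r_gt0; have := @x_range r; lia.
Qed.

Lemma kunz_sg_ge_3m n : 3 * m <= n -> kunz_sg m x n.
Proof.
case: (edivnP n m) => q r -> /implyP/(_ m_gt0) lt_rm le_3m.
rewrite kunz_sgE //; have [-> // | r_gt0] := posnP r.
have q_ge3 : 3 <= q by nia.
by have := @x_range r; lia.
Qed.

Lemma kunz_sg_add a b :
  kunz_ones_closed m x -> kunz_sg m x a -> kunz_sg m x b -> kunz_sg m x (a + b).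
Proof.
move=> closed.
case: (edivnP a m) => qa ra -> /implyP/(_ m_gt0) lt_ra.
case: (edivnP b m) => qb rb -> /implyP/(_ m_gt0) lt_rb.
rewrite !kunz_sgE //.
have [-> _ | ra_gt0] := posnP ra.
  by rewrite addn0 addnA -mulnDl kunz_sgE //; lia.
have [-> | rb_gt0] := posnP rb.
  by rewrite addn0 addnAC -mulnDl kunz_sgE //; lia.
have := @x_range ra; have := @x_range rb.
have [lt_sum | ge_sum] := ltnP (ra + rb) m.
  have -> : qa * m + ra + (qb * m + rb) = (qa + qb) * m + (ra + rb).
    by rewrite mulnDl; lia.
  by rewrite kunz_sgE //; have := @x_range (ra + rb); have := closed ra rb; lia.
have -> : qa * m + ra + (qb * m + rb) = (qa + qb).+1 * m + (ra + rb - m).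
  by rewrite mulSnr mulnDl; lia.
by rewrite kunz_sgE; [have := @x_range (ra + rb - m) | ]; lia.
Qed.

Lemma kunz_sg_numsg : kunz_ones_closed m x -> is_numsg (kunz_sg m x).
Proof.
move=> closed; split=> [|a b|]; first by rewrite /kunz_sg mod0n.
  exact: kunz_sg_add.
by exists (3 * m) => n; apply: kunz_sg_ge_3m.
Qed.

Lemma kunz_sg_mult : mult_is (kunz_sg m x) m.
Proof.
split=> // [|k /andP[k_gt0 lt_km]]; first exact: kunz_sg_m.
by apply/negP => /(kunz_sg_ge_m k_gt0); rewrite leqNgt lt_km.
Qed.

Lemma mingen_kunz_sg k r : r < m ->
  mingen (kunz_sg m x) (k * m + r) =
    if r == 0 then k == 1 else (k == xi x r) && kunz_mingen m x r.
Proof.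
move=> lt_rm; have [-> | r_gt0] := posnP r; rewrite /= ?addn0.
  case: k => [|[|k]]; first by rewrite mul0n.
    rewrite mul1n; apply/mingenP; split=> [||a /andP[a_gt0 lt_am]] //.
      exact: kunz_sg_m.
    by move/(kunz_sg_ge_m a_gt0); rewrite leqNgt lt_am.
  apply/negbTE/(@not_mingen_sum _ _ m); rewrite ?kunz_sg_m //; first by nia.
  by rewrite mulSnr addnK -[_ * m]addn0 kunz_sgE.
case: (ltngtP k (xi x r)) => [lt_kx | lt_xk | -> //].
  by apply/negbTE/negP => /mingenP[_]; rewrite kunz_sgE // (gtn_eqF r_gt0) leqNgt lt_kx.
apply/negbTE/(@not_mingen_sum _ _ m); rewrite ?kunz_sg_m //; first by nia.
have -> : k * m + r - m = k.-1 * m + r by case: k lt_xk => // k _; rewrite mulSnr; lia.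
by rewrite kunz_sgE // (gtn_eqF r_gt0); lia.
Qed.

Lemma kunz_sg_edim : edim_is (kunz_sg m x) (1 + count (kunz_mingen m x) (iota 1 m.-1)).
Proof.
exists (4 * m); split.
  move=> n; apply: contraTT; rewrite -leqNgt => le_4m.
  apply: (@not_mingen_sum _ _ m); rewrite ?kunz_sg_m //; first by lia.
  by apply: kunz_sg_ge_3m; lia.
rewrite count_iota_blocks iota0_pred // big_cons count_sum.
congr (_ + _); first by rewrite !big_ord_recr big_ord0 /= !mingen_kunz_sg.
apply: eq_big_seq => r; rewrite mem_iota => /andP[r_gt0 lt_r].
rewrite !big_ord_recr big_ord0 /= !mingen_kunz_sg; try lia.
rewrite (gtn_eqF r_gt0); have := @x_range r.
by case: (xi x r) => [|[|[|[|?]]]] /=; rewrite ?addn0 ?add0n; lia.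
Qed.

Lemma kunz_mingen1 i : 0 < i < m -> xi x i = 1 -> kunz_mingen m x i.
Proof.
move=> iP xi1; rewrite /kunz_mingen xi1; apply/mingenP; split; first by lia.
  by rewrite kunz_sgE ?xi1 ?orbT //; lia.
move=> a /andP[a_gt0 lt_a] /(kunz_sg_ge_m a_gt0) le_ma.
have rest_gt0 : 0 < 1 * m + i - a by lia.
by apply/negP => /(kunz_sg_ge_m rest_gt0); lia.
Qed.

Lemma kunz_mingen2 i : 0 < i < m -> xi x i = 2 ->
  kunz_mingen m x i = ~~ sum_of_ones x i.
Proof.
move=> iP xi2; rewrite /kunz_mingen xi2.
apply/mingenP/hasPn => [[_ _ noSplit] j | noOnes].
  rewrite mem_iota => jP; apply/negP => /andP[/eqP xj1 /eqP xij1].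
  have := noSplit (1 * m + j); rewrite kunz_sgE ?xj1 ?orbT; try lia.
  have -> : 2 * m + i - (1 * m + j) = 1 * m + (i - j) by lia.
  by rewrite kunz_sgE ?xij1 ?orbT; lia.
split; first by lia.
  by rewrite kunz_sgE ?xi2 ?orbT; lia.
move=> a /andP[a_gt0 lt_a] Sa; apply/negP => Sa'.
have le_ma := kunz_sg_ge_m a_gt0 Sa.
have rest_gt0 : 0 < 2 * m + i - a by lia.
have le_ma' := kunz_sg_ge_m rest_gt0 Sa'.
move: Sa Sa'; have -> : a = 1 * m + (a - m) by lia.
have -> : 2 * m + i - (1 * m + (a - m)) = 1 * m + (i - (a - m)) by lia.
rewrite !kunz_sgE; try lia.
have [d0 | d_gt0] := posnP (a - m); first by rewrite d0 subn0 xi2; lia.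
have [di | d_lt_i] := eqVneq (a - m) i; first by rewrite di xi2; lia.
move: (noOnes (a - m)); rewrite mem_iota.
by have := @x_range (a - m); have := @x_range (i - (a - m)); lia.
Qed.

Lemma kunz_mingen3_wrapN i j : 0 < i -> i < j < m -> xi x i = 3 ->
  xi x j = 1 -> xi x (i + m - j) = 1 -> ~~ kunz_mingen m x i.
Proof.
move=> i_gt0 jP xi3 xj1 xij1; rewrite /kunz_mingen xi3.
apply: (@not_mingen_sum _ _ (1 * m + j)); first by lia.
  by rewrite kunz_sgE ?xj1 ?orbT; lia.
have -> : 3 * m + i - (1 * m + j) = 1 * m + (i + m - j) by lia.
by rewrite kunz_sgE ?xij1 ?orbT; lia.
Qed.

End KunzSemigroup.

Section KunzCoordinates.

Variables (S : nat -> bool) (m : nat).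

Lemma size_kunz_coords : size (kunz_coords m S) = m.-1.
Proof. by rewrite size_map size_iota. Qed.

Lemma xi_kunz_coords i : 0 < i < m ->
  xi (kunz_coords m S) i = if S (1 * m + i) then 1 else if S (2 * m + i) then 2 else 3.
Proof.
move=> iP; rewrite /xi (nth_map 0) ?size_iota; last by lia.
by rewrite nth_iota ?add1n ?prednK; lia.
Qed.

Lemma kunz_coords_range : kunz_range m (kunz_coords m S).
Proof. by move=> i /xi_kunz_coords->; case: ifP => //; case: ifP. Qed.

Hypotheses (S_numsg : is_numsg S) (S_mult : mult_is S m).

Lemma mem_mulmD k n : S n -> S (k * m + n).
Proof.
case: S_numsg S_mult => _ Sadd _ [_ Sm _] Sn.
by elim: k => [|k IH]; rewrite ?add0n // mulSn -addnA Sadd.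
Qed.

Lemma kunz_coords_ones_closed : kunz_ones_closed m (kunz_coords m S).
Proof.
case: S_numsg => _ Sadd _ i j i_gt0 j_gt0 lt_ijm.
rewrite !xi_kunz_coords; try lia.
case Si: (S (1 * m + i)); last by case: ifP.
case Sj: (S (1 * m + j)); last by case: ifP.
have := Sadd _ _ Si Sj; rewrite (_ : _ + _ = 2 * m + (i + j)); last by lia.
by move=> ->; case: ifP.
Qed.

Lemma count_gaps_3m :
  count (predC S) (iota 0 (3 * m)) = m.-1 + excess m (kunz_coords m S).
Proof.
case: S_numsg S_mult => S0 _ _ [m_gt0 _ Smin].
rewrite count_iota_blocks iota0_pred // big_cons big1 ?add0n; last first.
  by move=> k _; rewrite /= addn0 -[k * m]addn0 mem_mulmD.
set y := kunz_coords m S.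
have -> : m.-1 + excess m y =
    \sum_(r <- iota 1 m.-1) (1 + (2 <= xi y r) + (3 <= xi y r)).
  by rewrite !big_split /= sum1_size size_iota -!count_sum addnA.
apply: eq_big_seq => r; rewrite mem_iota => /andP[r_gt0 lt_r].
have Sr : S r = false by apply/negbTE/Smin; lia.
rewrite !big_ord_recr big_ord0 /= xi_kunz_coords ?mul0n ?add0n ?Sr; last by lia.
case S1: (S (1 * m + r)); last by case: (S (2 * m + r)).
have -> : 2 * m + r = 1 * m + (1 * m + r) by lia.
by rewrite mem_mulmD.
Qed.

Lemma excess_of_gap_3m r : 0 < r < m -> ~~ S (3 * m + r) ->
  m.+2 <= 2 * excess m (kunz_coords m S).
Proof.
case: S_numsg => _ Sadd _ rP S3r.
have S2r : ~~ S (2 * m + r).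
  apply: contra S3r => S2r.
  have -> : 3 * m + r = 1 * m + (2 * m + r) by lia.
  exact: mem_mulmD.
have S1r : ~~ S (1 * m + r).
  apply: contra S2r => S1r.
  have -> : 2 * m + r = 1 * m + (1 * m + r) by lia.
  exact: mem_mulmD.
set y := kunz_coords m S.
have y3 : xi y r = 3 by rewrite xi_kunz_coords ?(negbTE S1r) ?(negbTE S2r).
have mem_coord1 j : 0 < j < m -> ~~ (2 <= xi y j) -> S (1 * m + j).
  by move=> jP; rewrite xi_kunz_coords //; case: ifP => //; case: ifP.
have below j : 0 < j < r -> (2 <= xi y j) || (2 <= xi y (r - j)).
  move=> jP; apply/contraT; rewrite negb_or => /andP[yj yrj].
  have jm : 0 < j < m by lia.
  have rjm : 0 < r - j < m by lia.
  have := Sadd _ _ (mem_coord1 j jm yj) (mem_coord1 _ rjm yrj).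
  by rewrite (_ : 1 * m + j + (1 * m + (r - j)) = 2 * m + r) ?(negbTE S2r) //; lia.
have around j : r < j < m -> (2 <= xi y j) || (2 <= xi y (r + m - j)).
  move=> jP; apply/contraT; rewrite negb_or => /andP[yj yrj].
  have jm : 0 < j < m by lia.
  have rjm : 0 < r + m - j < m by lia.
  have := Sadd _ _ (mem_coord1 j jm yj) (mem_coord1 _ rjm yrj).
  by rewrite (_ : 1 * m + j + (1 * m + (r + m - j)) = 3 * m + r) ?(negbTE S3r) //; lia.
have y2 : 2 <= xi y r by rewrite y3.
by have := excess_pairs_around rP y2 below around; rewrite y3 /=; lia.
Qed.

Lemma mem_ge_3m K : genus_is S (m.-1 + K) -> 2 * K <= m ->
  forall n, 3 * m <= n -> S n.
Proof.
case: S_numsg S_mult => S0 _ _ [m_gt0 _ _] gS le_2K_m n.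
case: (edivnP n m) => q r -> /implyP/(_ m_gt0) lt_rm le_3m.
have q_ge3 : 3 <= q by nia.
rewrite -(subnK q_ge3) mulnDl -addnA mem_mulmD //; apply/contraT => S3r.
have [r0 | r_gt0] := posnP r.
  by move: S3r; rewrite r0 addn0 -[3 * m]addn0 mem_mulmD.
have rP : 0 < r < m by lia.
have := excess_of_gap_3m rP S3r.
have := genus_is_ge (3 * m + r).+1 gS.
rewrite -addnS iotaD count_cat count_gaps_3m.
have : 0 < count (predC S) (iota (0 + 3 * m) r.+1).
  by apply: (@count_mem_gt0 _ _ (3 * m + r)) => //; rewrite mem_iota; lia.
lia.
Qed.

Lemma kunz_sg_coords :
  (forall n, 3 * m <= n -> S n) -> S =1 kunz_sg m (kunz_coords m S).
Proof.
case: S_numsg S_mult => _ _ _ [m_gt0 _ Smin] Slarge n.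
case: (edivnP n m) => q r -> /implyP/(_ m_gt0) lt_rm.
rewrite kunz_sgE //; have [-> | r_gt0] := posnP r.
  by rewrite addn0 -[q * m]addn0 mem_mulmD //; case: S_numsg.
rewrite xi_kunz_coords /=; last by lia.
case: q => [|[|[|q]]].
- have Sr : S r = false by apply/negbTE/Smin; lia.
  by rewrite mul0n add0n Sr; case: ifP => //; case: ifP.
- by case: ifP => // _; case: ifP.
- case S1r: (S (1 * m + r)); last by case: ifP.
  have -> : 2 * m + r = 1 * m + (1 * m + r) by lia.
  exact: mem_mulmD.
- by rewrite Slarge; [case: ifP => //; case: ifP | nia].
Qed.

End KunzCoordinates.

Lemma kunz_coords_ext m S S' : S =1 S' -> kunz_coords m S = kunz_coords m S'.
Proof. by move=> eqS; apply: eq_map => r; rewrite !eqS. Qed.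

Lemma kunz_coords_sg m x : 0 < m -> kunz_range m x -> size x = m.-1 ->
  kunz_coords m (kunz_sg m x) = x.
Proof.
move=> m_gt0 x_range size_x; apply: (@eq_from_nth _ 0); rewrite size_kunz_coords //.
move=> i lt_i; have iP : 0 < i.+1 < m by lia.
have := xi_kunz_coords (kunz_sg m x) iP; rewrite /xi /= => ->.
rewrite !kunz_sgE //; have := x_range _ iP; rewrite /xi /=.
by case: (nth 0 x i) => [|[|[|[|?]]]].
Qed.

Lemma kunz_sg_genus m x : 0 < m -> kunz_range m x -> kunz_ones_closed m x ->
  size x = m.-1 -> genus_is (kunz_sg m x) (m.-1 + excess m x).
Proof.
move=> m_gt0 x_range closed size_x; exists (3 * m); split; first exact: kunz_sg_ge_3m.
rewrite count_gaps_3m ?kunz_coords_sg //; [exact: kunz_sg_numsg | exact: kunz_sg_mult].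
Qed.

Lemma iota_split_before m T : T < m -> iota 1 m.-1 = iota 1 T ++ iota T.+1 (m.-1 - T).
Proof. by move=> lt_Tm; rewrite -[T.+1]add1n -iotaD subnKC //; lia. Qed.

Lemma count_late2E m x T : T < m ->
  count_late2 m x T = count (fun i => xi x i == 2) (iota T.+1 (m.-1 - T)).
Proof.
move=> lt_Tm; rewrite /count_late2 (iota_split_before lt_Tm) count_cat.
rewrite (@eq_in_count _ _ pred0 (iota 1 T)) ?count_pred0 => [|i]; last first.
  by rewrite mem_iota /=; lia.
by apply: eq_in_count => i; rewrite mem_iota; lia.
Qed.

Lemma excess_split m x T : T < m -> kunz_range m x ->
  (forall i, T < i < m -> xi x i <= 2) ->
  excess m x = count_coord x 2 T + 2 * count_coord x 3 T + count_late2 m x T.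
Proof.
move=> lt_Tm x_range late.
rewrite /excess count_late2E // (iota_split_before lt_Tm) !count_cat.
have early2 : count (fun i => 2 <= xi x i) (iota 1 T) + count pred0 (iota 1 T) =
              count_coord x 2 T + count_coord x 3 T.
  apply: eq_in_countD => i; rewrite mem_iota => iP.
  by have := @x_range i; case: (xi x i) => [|[|[|[|?]]]] /=; lia.
have early3 : count (fun i => 3 <= xi x i) (iota 1 T) = count_coord x 3 T.
  apply: eq_in_count => i; rewrite mem_iota => iP.
  by have := @x_range i; case: (xi x i) => [|[|[|[|?]]]] /=; lia.
have late2 : count (fun i => 2 <= xi x i) (iota T.+1 (m.-1 - T)) =
             count (fun i => xi x i == 2) (iota T.+1 (m.-1 - T)).
  apply: eq_in_count => i; rewrite mem_iota => iP.
  by have := @x_range i; have := late i; case: (xi x i) => [|[|[|[|?]]]] /=; lia.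
have late3 : count (fun i => 3 <= xi x i) (iota T.+1 (m.-1 - T)) = 0.
  rewrite (@eq_in_count _ _ pred0) ?count_pred0 // => i; rewrite mem_iota => iP.
  by have := late i; rewrite /=; lia.
rewrite count_pred0 in early2; lia.
Qed.

Section SmallExcess.

Variables (m K : nat) (x : seq nat).
Hypotheses (m_gt0 : 0 < m) (x_range : kunz_range m x) (x_closed : kunz_ones_closed m x).
Hypotheses (x_excess : excess m x = K) (le_2K_m : 2 * K <= m).

Lemma pairs_below_coord3 i : 0 < i < m -> xi x i = 3 ->
  forall j, 0 < j < i -> (2 <= xi x j) || (2 <= xi x (i - j)).
Proof.
move=> iP xi3 j jP; have := x_closed (i := j) (j := i - j).
rewrite subnKC ?xi3; last by lia.
by have := @x_range j; have := @x_range (i - j); lia.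
Qed.

Lemma coord3_bound i : 0 < i < m -> xi x i = 3 -> i + 3 <= 2 * K.
Proof.
move=> iP xi3; have xi2 : 2 <= xi x i by rewrite xi3.
have := excess_pairs_below iP xi2 (pairs_below_coord3 iP xi3).
by rewrite xi3 x_excess; lia.
Qed.

Lemma coord_late_le2 i : (2 * K).-1 < i < m -> xi x i <= 2.
Proof.
move=> iT; have iP : 0 < i < m by lia.
by have := coord3_bound iP; have := x_range iP; lia.
Qed.

Lemma excess_decomposition (T := (2 * K).-1) :
  K = count_coord x 2 T + 2 * count_coord x 3 T + count_late2 m x T.
Proof.
have lt_Tm : T < m by rewrite /T; lia.
by rewrite -x_excess (excess_split lt_Tm x_range coord_late_le2).
Qed.

Lemma kunz_mingen3N i : 0 < i < m -> xi x i = 3 -> ~~ kunz_mingen m x i.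
Proof.
move=> iP xi3; apply/negP => mg_i; have xi2 : 2 <= xi x i by rewrite xi3.
have around j : i < j < m -> (2 <= xi x j) || (2 <= xi x (i + m - j)).
  move=> jP; apply/contraT; rewrite negb_or => /andP[xj xij].
  have := @kunz_mingen3_wrapN m x m_gt0 i j; rewrite mg_i.
  by have := @x_range j; have := @x_range (i + m - j); lia.
have := excess_pairs_around iP xi2 (pairs_below_coord3 iP xi3) around.
by rewrite xi3 x_excess; lia.
Qed.

Lemma kunz_mingen2_lateN i : 0 < i < m -> xi x i = 2 -> 2 * K <= i ->
  ~~ kunz_mingen m x i.
Proof.
move=> iP xi2 le_2K_i.
rewrite kunz_mingen2 // negbK; apply/contraT => /hasPn noOnes.
have xi_ge2 : 2 <= xi x i by rewrite xi2.
have below j : 0 < j < i -> (2 <= xi x j) || (2 <= xi x (i - j)).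
  move=> jP; have := noOnes j; rewrite mem_iota.
  by have := @x_range j; have := @x_range (i - j); lia.
by have := excess_pairs_below iP xi_ge2 below; rewrite xi2 x_excess; lia.
Qed.

Lemma count_nonmingen (T := (2 * K).-1) :
  count (predC (kunz_mingen m x)) (iota 1 m.-1) =
    count_coord x 3 T + count (two_of_ones x) (iota 1 T) + count_late2 m x T.
Proof.
have lt_Tm : T < m by rewrite /T; lia.
rewrite count_late2E // (iota_split_before lt_Tm) count_cat.
have early : count (predC (kunz_mingen m x)) (iota 1 T) + count pred0 (iota 1 T) =
             count_coord x 3 T + count (two_of_ones x) (iota 1 T).
  apply: eq_in_countD => i; rewrite mem_iota => iT; have iP : 0 < i < m by lia.
  have [xi1 | [xi2 | xi3]] : xi x i = 1 \/ xi x i = 2 \/ xi x i = 3.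
    by have := x_range iP; lia.
  - by rewrite /two_of_ones /= kunz_mingen1 // xi1.
  - by rewrite /two_of_ones /= kunz_mingen2 // xi2 negbK addn0.
  - by rewrite /two_of_ones /= (negbTE (kunz_mingen3N iP xi3)) xi3.
have late : count (predC (kunz_mingen m x)) (iota T.+1 (m.-1 - T)) =
            count (fun i => xi x i == 2) (iota T.+1 (m.-1 - T)).
  apply: eq_in_count => i; rewrite mem_iota => iT; have iP : 0 < i < m by lia.
  have [xi1 | [xi2 | xi3]] : xi x i = 1 \/ xi x i = 2 \/ xi x i = 3.
    by have := x_range iP; lia.
  - by rewrite /= kunz_mingen1 // xi1.
  - by rewrite /= xi2 (kunz_mingen2_lateN iP xi2) //; rewrite /T in iT; lia.
  - by have := coord3_bound iP xi3; rewrite /T in iT; lia.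
by rewrite count_pred0 in early; lia.
Qed.

End SmallExcess.

Lemma xi_take x T j : 0 < j <= T -> xi (take T x) j = xi x j.
Proof. by move=> jP; rewrite /xi nth_take //; lia. Qed.

Lemma count_take (P : pred nat) x T : T <= size x ->
  count P (take T x) = count (fun i => P (xi x i)) (iota 1 T).
Proof.
move=> le_T; rewrite -{1}(mkseq_nth 0 (take T x)) /mkseq count_map size_takel //.
rewrite -[iota 1 T]/(iota (1 + 0) T) iotaDl count_map.
by apply: eq_in_count => i; rewrite mem_iota => iP; rewrite /= /xi add1n nth_take //; lia.
Qed.

Lemma c_take x T : T <= size x -> c_ (take T x) = count (two_of_ones x) (iota 1 T).
Proof.
move=> le_T; rewrite /c_ size_takel //; apply: eq_in_count => i; rewrite mem_iota => iP.
rewrite /two_of_ones /sum_of_ones.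
apply/hasP/andP => [[j1 j1P /hasP[j2 j2P]] | [xi2 /hasP[j jP]]].
  move: j1P j2P; rewrite !mem_iota => j1P j2P; rewrite !xi_take; try lia.
  case/andP => /eqP sum_j /eqP[xj1 xj2 ->]; split=> //; apply/hasP; exists j1.
    by rewrite mem_iota; lia.
  by rewrite xj1 -sum_j addKn xj2 !eqxx.
rewrite mem_iota in jP; case/andP => /eqP xj1 /eqP xij1.
exists j; first by rewrite mem_iota; lia.
apply/hasP; exists (i - j); first by rewrite mem_iota; lia.
by rewrite !xi_take ?xj1 ?xij1 ?xi2 ?subnKC ?eqxx //; lia.
Qed.

Lemma int_to_nat_odd K : int_to_nat (2 * (K%:Z - 1) + 1)%R = (2 * K).-1.
Proof.
case: K => [|K] //; have -> : (2 * (K.+1%:Z - 1) + 1)%R = Posz (2 * K + 1) by lia.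
by rewrite /=; lia.
Qed.

Lemma count_late2_int m K x :
  count (fun i => (2 * (K%:Z - 1) + 2 <= i%:Z)%R && (xi x i == 2)) (iota 1 m.-1) =
  count_late2 m x (2 * K).-1.
Proof.
apply: eq_in_count => i; rewrite mem_iota => iP.
by congr (_ && _); apply/idP/idP; lia.
Qed.

Lemma seq_classP m K k2 x (T := (2 * K).-1) : 0 < m -> 2 * K <= m ->
  seq_class m (K%:Z - 1) k2 x <->
  [/\ size x = m.-1, kunz_range m x, kunz_ones_closed m x, excess m x = K &
       abc_condition K k2 x].
Proof.
move=> m_gt0 le_2K_m; have lt_Tm : T < m by rewrite /T; lia.
rewrite /seq_class /xbar int_to_nat_odd count_late2_int -/T.
split=> [[size_x [x123 late12 no113 count4 abc]] |
         [size_x x_range x_closed x_excess abc]];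
  have le_T_size : T <= size x by rewrite size_x; lia.
- rewrite /a_ /b_ !count_take ?c_take // in count4 abc.
  rewrite -/(count_coord x 2 T) -/(count_coord x 3 T) in count4 abc.
  have x_range : kunz_range m x.
    move=> i iP; move/allP: x123 => /(_ (xi x i)).
    rewrite /xi mem_nth ?size_x; last by lia.
    by rewrite !inE => /(_ isT); case: (nth 0 x i.-1) => [|[|[|[|?]]]].
  have late i : T < i < m -> xi x i <= 2.
    by move=> iP; have := late12 i; rewrite !inE; have := x_range i; lia.
  split=> //.
  + move=> i j i_gt0 j_gt0 lt_ijm xi1 xj1; have := x_range (i + j).
    have [le_ijT | lt_Tij] := leqP (i + j) T; last by have := late (i + j); lia.
    by move: (no113 i j (i + j)); rewrite xi1 xj1 !xpair_eqE /=; lia.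
  + by rewrite (excess_split lt_Tm) //; lia.
rewrite /a_ /b_ !count_take ?c_take // -/(count_coord x 2 T) -/(count_coord x 3 T).
have no3 i : 0 < i < m -> xi x i = 3 -> i + 3 <= 2 * K.
  exact: (coord3_bound m_gt0 x_range x_closed x_excess le_2K_m).
split=> //; split.
- apply/allP => v /(nthP 0)[i lt_i <-].
  have iP : 0 < i.+1 < m by move: lt_i; rewrite size_x; lia.
  by have := x_range _ iP; rewrite /xi /= !inE; lia.
- move=> i iP le_i; have := x_range i; have := no3 i; rewrite !inE; lia.
- move=> i1 i2 i3 i1_gt0 i2_gt0 _ le_i3 sum_i; apply/negP; rewrite !xpair_eqE.
  case/andP => /andP[/eqP xi1 /eqP xi2] /eqP xi3.
  by have := x_closed i1 i2 i1_gt0 i2_gt0; rewrite sum_i; lia.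
- have /= := excess_decomposition m_gt0 x_range x_closed x_excess le_2K_m.
  by rewrite -/T; lia.
- exact: abc.
Qed.

Lemma kunz_sg_class m K k2 x : 0 < m -> 2 * K <= m ->
  size x = m.-1 -> kunz_range m x -> kunz_ones_closed m x -> excess m x = K ->
  semigroup_class m (K%:Z - 1) k2 (kunz_sg m x) <-> abc_condition K k2 x.
Proof.
move=> m_gt0 le_2K_m size_x x_range x_closed x_excess; rewrite /abc_condition /=.
have gen := kunz_sg_genus m_gt0 x_range x_closed size_x; rewrite x_excess in gen.
have edim := kunz_sg_edim m_gt0 x_range.
have := excess_decomposition m_gt0 x_range x_closed x_excess le_2K_m.
have := count_nonmingen m_gt0 x_range x_closed x_excess le_2K_m.
have := count_predC (kunz_mingen m x) (iota 1 m.-1); rewrite size_iota.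
split=> [[_ [_ [g [e [gS eS gE eE]]]]] | abc].
  by rewrite (genus_is_unique gS gen) (edim_is_unique eS edim) in gE eE; lia.
split; first exact: kunz_sg_numsg.
split; first exact: kunz_sg_mult.
by exists (m.-1 + K), (1 + count (kunz_mingen m x) (iota 1 m.-1)); split=> //; lia.
Qed.

Lemma semigroup_class_kunz m K k2 S : 2 * K <= m ->
  semigroup_class m (K%:Z - 1) k2 S ->
  S =1 kunz_sg m (kunz_coords m S) /\ excess m (kunz_coords m S) = K.
Proof.
move=> le_2K_m [S_numsg [S_mult [g [e [gS _ gE _]]]]].
have {gE}gK : g = m.-1 + K by lia.
rewrite gK in gS; have S_large := mem_ge_3m S_numsg S_mult gS le_2K_m.
split; first exact: kunz_sg_coords.
have gS' : genus_is S (m.-1 + excess m (kunz_coords m S)).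
  by exists (3 * m); split; last exact: count_gaps_3m.
by have := genus_is_unique gS gS'; lia.
Qed.

Theorem theorem8p5 (k1 k2 : int) (m : nat) :
  (-1 <= k1)%R -> (k1 <= k2)%R -> (2 * k1 + 2 <= m%:Z)%R -> 0 < m ->
  exists (f : (nat -> bool) -> seq nat) (g : seq nat -> (nat -> bool)),
    [/\ (forall S S', semigroup_class m k1 k2 S -> S =1 S' -> f S = f S'),
        (forall S, semigroup_class m k1 k2 S ->
                   seq_class m k1 k2 (f S) /\ g (f S) =1 S)
      & (forall x, seq_class m k1 k2 x ->
                   semigroup_class m k1 k2 (g x) /\ f (g x) = x)].
Proof.
(* The bijection does not need k1 <= k2. *)
move=> k1_ge _ m_ge m_gt0.
have [K k1E] : exists K : nat, k1 = (K%:Z - 1)%R.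
  by case: k1 k1_ge {m_ge} => [n | n] k1_ge; [exists n.+1 | exists 0]; lia.
subst k1.
have le_2K_m : 2 * K <= m by lia.
exists (kunz_coords m), (kunz_sg m); split.
- by move=> S S' _ /kunz_coords_ext.
- move=> S classS; have [S_numsg _] := classS.
  have [eqS y_excess] := semigroup_class_kunz le_2K_m classS.
  have y_size := size_kunz_coords S m; have y_range := kunz_coords_range S (m := m).
  have y_closed := kunz_coords_ones_closed (m := m) S_numsg.
  split; last by move=> n; rewrite -eqS.
  apply/seq_classP => //; split=> //.
  apply/(kunz_sg_class k2 m_gt0 le_2K_m y_size y_range y_closed y_excess).
  exact: (semigroup_class_ext eqS classS).
- move=> x /seq_classP[] // size_x x_range x_closed x_excess abc.
  by split; [apply/kunz_sg_class | exact: kunz_coords_sg].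
Qed.
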